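(* Let $\alpha:A^{\Delta}\to(H,V)$ be a homomorphism into a finite forest algebra with $H$ idempotent and commutative, and let $\Gamma_1,\ldots,\Gamma_r$ be the subminimal reachability classes of $(H,V)$. Then $\alpha_{\Gamma_{\mathsf{min}}}:A^{\Delta}\to(H_{\Gamma_{\mathsf{min}}},V_{\Gamma_{\mathsf{min}}})$ factors through the direct product homomorphism $\prod_{j=1}^r\alpha_{\ge\Gamma_j}:A^{\Delta}\to\prod_{j=1}^r(H_{\ge\Gamma_j},V_{\ge\Gamma_j})$. Further, each of the algebras $(H_{\ge\Gamma_j},V_{\ge\Gamma_j})$ has a unique subminimal reachability class.
   Context: $A^{\Delta}=(H_A,V_A)$ is the free forest algebra of forests and contexts over $A$. A forest algebra $(H,V)$: additive monoid $H$, monoid $V$ acting faithfully on the left, containing $g\mapsto g+h$, $g\mapsto h+g$. With $H$ idempotent and commutative, the sum $\infty$ of all elements of $H$ is absorbing. $\beta$ factors through $\gamma$ if $\gamma(s)=\gamma(s')$ implies $\beta(s)=\beta(s')$ for forests $s,s'$. The direct product homomorphism sends $s$ to the tuple $(\alpha_{\ge\Gamma_1}(s),\ldots,\alpha_{\ge\Gamma_r}(s))$. Reachability: $h\le h'$ iff $h=vh'$ for some $v\in V$; reachability classes are the classes of mutual reachability, partially ordered by $\le$. $\Gamma_{\mathsf{min}}$ is the class of $\infty$ (the least class); a class $\Gamma$ is subminimal if $\Gamma_{\mathsf{min}}<\Gamma$ with no class strictly between. A reachability ideal $I$ is a downward closed subset of $H$; the quotient $\alpha_I:A^{\Delta}\to(H/I,V/I)$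 identifies forests $s,s'$ iff $\alpha(s)=\alpha(s')\notin I$ or $\alpha(s),\alpha(s')\in I$ (so $H/I=(H\setminus I)\cup\{\infty\}$), contexts being identified when they act identically. For a class $\Gamma$: $\alpha_\Gamma$, $(H_\Gamma,V_\Gamma)$ correspond to $I=\{h:h\not>\Gamma\}$, and $\alpha_{\ge\Gamma}$, $(H_{\ge\Gamma},V_{\ge\Gamma})$ to $I=\{h:h\not\ge\Gamma\}$. *)

From mathcomp Require Import all_boot.
Set Implicit Arguments. Unset Strict Implicit. Unset Printing Implicit Defensive.

Inductive tree (A : Type) : Type := Node of A & seq (tree A).
Definition forest (A : Type) := seq (tree A).

(* A context is a forest with exactly one hole:  l ++ [t] ++ r, where the
   distinguished "tree" t is either the hole itself or a node whose
   children form a context. *)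
Inductive context (A : Type) : Type := Ctx of forest A & ctree A & forest A
with ctree (A : Type) : Type := CHole | CNode of A & context A.
Arguments CHole {A}.

Section FreeForestAlgebra.
Variable A : Type.

Definition hole : context A := Ctx [::] CHole [::].

Fixpoint fill (p : context A) (s : forest A) {struct p} : forest A :=
  match p with Ctx l t r => l ++ tfill t s ++ r end
with tfill (t : ctree A) (s : forest A) {struct t} : forest A :=
  match t with CHole => s | CNode a c => [:: Node a (fill c s)] end.

(* p q : plug the context q into the hole of p (so (p q) s = p (q s)) *)
Fixpoint ccomp (p q : context A) {struct p} : context A :=
  match p with
  | Ctx l t r =>
      match t with
      | CHole => let: Ctx ql qt qr := q in Ctx (l ++ ql) qt (qr ++ r)
      | CNode a c => Ctx l (CNode a (ccomp c q)) r
      end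
  end.
End FreeForestAlgebra.

Definition forest_algebra (H V : finType) (add : H -> H -> H) (zero : H)
    (mul : V -> V -> V) (one : V) (act : V -> H -> H) : Prop :=
  ((forall x y z, add x (add y z) = add (add x y) z) /\
   (forall x, add zero x = x) /\ (forall x, add x zero = x)) /\
  ((forall u v w, mul u (mul v w) = mul (mul u v) w) /\
   (forall v, mul one v = v) /\ (forall v, mul v one = v)) /\
  ((forall v w h, act (mul v w) h = act v (act w h)) /\
   (forall h, act one h = h)) /\
  (forall v w, (forall h, act v h = act w h) -> v = w) /\
  (forall h, (exists v, forall g, act v g = add g h) /\
             (exists v, forall g, act v g = add h g)).

Definition forest_hom (A : Type) (H V : Type) (add : H -> H -> H) (zero : H)
    (mul : V -> V -> V) (one : V) (act : V -> H -> H)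
    (aH : forest A -> H) (aV : context A -> V) : Prop :=
  [/\ aH [::] = zero, (forall s t, aH (s ++ t) = add (aH s) (aH t)),
      aV (hole A) = one, (forall p q, aV (ccomp p q) = mul (aV p) (aV q)) &
      (forall p s, aH (fill p s) = act (aV p) (aH s))].

(* Reachability, relative to a carrier D of elements of H (D = setT    *)
(* for the algebra itself, D = H/I for a quotient).                    *)
Section Reach.
Variables (H V : finType) (D : {set H}) (add : H -> H -> H) (zero : H)
  (act : V -> H -> H).

Definition reachb (x y : H) : bool := [exists v : V, x == act v y].
Definition rclass (x : H) : {set H} := [set y in D | reachb x y && reachb y x].
Definition rclasses : {set {set H}} := [set rclass x | x in D].
Definition cle (G G' : {set H}) : bool :=
  [exists x in G, exists y in G', reachb x y].
Definition clt (G G' : {set H}) : bool := cle G G' && (G != G').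
Definition infty : H := \big[add/zero]_(h in D) h.
Definition Gmin : {set H} := rclass infty.
Definition subminimal (G : {set H}) : bool :=
  [&& G \in rclasses, clt Gmin G &
      [forall G' in rclasses, ~~ (clt Gmin G' && clt G' G)]].
Definition subminimals : {set {set H}} := [set G in rclasses | subminimal G].
End Reach.

Section Quotient.
Variables (H V : finType) (add : H -> H -> H) (zero : H) (act : V -> H -> H).

Local Notation D := [set: H].
Local Notation inf := (infty D add zero).

(* I = { h : h not > Gamma }   (gives alpha_Gamma) *)
Definition ideal_gt (G : {set H}) : {set H} :=
  [set h | ~~ clt act G (rclass D act h)].
(* I = { h : h not >= Gamma }  (gives alpha_{>=Gamma}) *)
Definition ideal_ge (G : {set H}) : {set H} :=
  [set h | ~~ cle act G (rclass D act h)].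

(* the image of h in H/I = (H \ I) u {infty}: all of I is sent to infty *)
Definition qval (I : {set H}) (h : H) : H := if h \in I then inf else h.
Definition qcarrier (I : {set H}) : {set H} := [set qval I h | h : H].
Definition qadd (I : {set H}) (x y : H) : H := qval I (add x y).
(* V/I acts on H/I; a class of contexts acts as any of its members *)
Definition qact (I : {set H}) (v : V) (x : H) : H := qval I (act v x).

Definition q_subminimals (I : {set H}) : {set {set H}} :=
  subminimals (qcarrier I) (qadd I) (qval I zero) (qact I).
End Quotient.

From mathcomp Require Import all_boot.
Set Implicit Arguments. Unset Strict Implicit. Unset Printing Implicit Defensive.

(* Idempotence and commutativity make the sum [inf] of all elements absorbing,
   so [inf] lies below every element and Gamma_min is the bottom class.  The
   quotient map for Gamma_min identifies exactly the elements of Gamma_min.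
   An element h outside Gamma_min lies above some class that is minimal among
   the classes other than Gamma_min, i.e. above a subminimal class Gamma_j; the
   j-th quotient then keeps h intact, so the product of the quotients
   determines h.  In the quotient by [h not >= Gamma] the elements are [inf]
   together with the elements above Gamma, reachability among the latter is
   unchanged and [inf] forms the bottom class on its own, so Gamma is its only
   subminimal class. *)

Section AbsorbingSums.
Variables (T : eqType) (op : T -> T -> T) (z : T).

Lemma big_op_mem (r : seq T) (P : pred T) y :
  associative op -> commutative op -> idempotent_op op ->
  y \in r -> P y -> op y (\big[op/z]_(i <- r | P i) i) = \big[op/z]_(i <- r | P i) i.
Proof.
move=> opA opC opxx; elim: r => //= a r IHr; rewrite inE big_cons.
case/orP => [/eqP-> -> | yr Py]; first by rewrite opA opxx.
by case: ifP => _; rewrite ?opA ?(opC y a) -?opA IHr.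
Qed.

Lemma big_absorbing (r : seq T) (P : pred T) e :
  (forall x, op e x = e) -> (forall x, op x e = e) ->
  e \in r -> P e -> \big[op/z]_(i <- r | P i) i = e.
Proof.
move=> opeL opeR; elim: r => //= a r IHr; rewrite inE big_cons.
case/orP => [/eqP<- -> | er Pe]; first by rewrite opeL.
by case: ifP => _; rewrite IHr.
Qed.

End AbsorbingSums.

Section Reachability.
Variables (H V : finType) (mul : V -> V -> V) (one : V) (act : V -> H -> H).
Hypothesis actM : forall v w h, act (mul v w) h = act v (act w h).
Hypothesis act1 : forall h, act one h = h.

Local Notation R := (reachb act).
Local Notation Cls := (rclass [set: H] act).

Lemma reachb_refl x : R x x.
Proof. by apply/existsP; exists one; rewrite act1. Qed.

Lemma reachb_trans x y z : R x y -> R y z -> R x z.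
Proof.
move=> /existsP[v /eqP->] /existsP[w /eqP->].
by apply/existsP; exists (mul v w); rewrite actM.
Qed.

Lemma reachb_act v x : R (act v x) x.
Proof. by apply/existsP; exists v. Qed.

Lemma mem_rclass x y : (y \in Cls x) = R x y && R y x.
Proof. by rewrite inE in_setT. Qed.

Lemma eq_rclass x y : (Cls x == Cls y) = R x y && R y x.
Proof.
apply/eqP/andP => [e | [xy yx]].
  by apply/andP; rewrite -mem_rclass e mem_rclass reachb_refl.
apply/setP => z; rewrite !mem_rclass.
by apply/andP/andP => -[? ?]; split; do ?[apply: reachb_trans; eassumption].
Qed.

Lemma cle_rclass x y : cle act (Cls x) (Cls y) = R x y.
Proof.
apply/existsP/idP => [[a /andP[]] | xy].
  rewrite mem_rclass => /andP[xa _] /existsP[b /andP[]].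
  by rewrite mem_rclass => /andP[_ yb] ab; apply: reachb_trans xa (reachb_trans ab yb).
exists x; rewrite mem_rclass reachb_refl /=.
by apply/existsP; exists y; rewrite mem_rclass reachb_refl.
Qed.

Lemma rclass_in_rclasses x : Cls x \in rclasses [set: H] act.
Proof. by apply/imsetP; exists x; rewrite ?in_setT. Qed.

End Reachability.

Section IdempotentForestAlgebra.
Variables (H V : finType) (add : H -> H -> H) (zero : H)
  (mul : V -> V -> V) (one : V) (act : V -> H -> H).
Hypothesis addA : associative add.
Hypothesis addC : commutative add.
Hypothesis addxx : idempotent_op add.
Hypothesis actM : forall v w h, act (mul v w) h = act v (act w h).
Hypothesis act1 : forall h, act one h = h.
Hypothesis act_addr : forall h, exists v, forall g, act v g = add g h.

Local Notation R := (reachb act).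
Local Notation Cls := (rclass [set: H] act).
Local Notation inf := (infty [set: H] add zero).
Local Notation Gm := (Gmin [set: H] add zero act).
Local Notation subs := (subminimals [set: H] add zero act).

Let R_refl := reachb_refl act1.
Let R_trans := reachb_trans actM.
Let eq_Cls := eq_rclass actM act1.
Let cle_Cls := cle_rclass actM act1.

Lemma add_infty y : add y inf = inf.
Proof. by apply: big_op_mem; rewrite ?mem_index_enum ?in_setT. Qed.

Lemma infty_add y : add inf y = inf.
Proof. by rewrite addC add_infty. Qed.

Lemma reachb_infty y : R inf y.
Proof. by have [v Hv] := act_addr inf; apply/existsP; exists v; rewrite Hv add_infty. Qed.

Lemma clt_Gmin x : clt act Gm (Cls x) = ~~ R x inf.
Proof. by rewrite /clt /Gmin cle_Cls reachb_infty eq_Cls reachb_infty. Qed.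

Lemma mem_ideal_gt_Gmin h : (h \in ideal_gt act Gm) = R h inf.
Proof. by rewrite inE clt_Gmin negbK. Qed.

Lemma mem_ideal_ge x h : (h \in ideal_ge act (Cls x)) = ~~ R x h.
Proof. by rewrite inE cle_Cls. Qed.

Lemma subminimal_rclass x :
  (Cls x \in subs) = ~~ R x inf && [forall y, R y x && ~~ R y inf ==> R x y].
Proof.
rewrite inE rclass_in_rclasses /subminimal rclass_in_rclasses clt_Gmin /=.
congr andb; apply/forall_inP/forallP => [F y | F _ /imsetP[y _ ->]].
  have := F _ (rclass_in_rclasses act y).
  by rewrite clt_Gmin /clt cle_Cls eq_Cls; case: (R y x); case: (R y inf); case: (R x y).
have := F y; rewrite /= clt_Gmin /clt cle_Cls eq_Cls.
by case: (R y x); case: (R y inf); case: (R x y).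
Qed.

Lemma subminimals_rclass G : G \in subs -> exists2 g, ~~ R g inf & G = Cls g.
Proof.
move=> Gs; have := Gs; rewrite inE => /andP[/imsetP[g _ Gg] _].
by move: Gs; rewrite Gg subminimal_rclass => /andP[gi _]; exists g.
Qed.

(* A witness minimising its down-set is minimal among the elements outside
   Gamma_min below h. *)
Lemma exists_subminimal_below h :
  ~~ R h inf -> exists2 x, Cls x \in subs & R x h.
Proof.
move=> hi; pose P x := ~~ R x inf && R x h.
have Ph : P h by rewrite /P hi R_refl.
case: (arg_minnP (fun x => #|[set y | R y x]|) Ph) => x /andP[xi xh] xmin.
exists x => //; rewrite subminimal_rclass xi.
apply/forallP => y; apply/implyP => /andP[yx yi]; apply: contraT => xy.
have := xmin y; rewrite /P yi (R_trans yx xh) => /(_ isT).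
rewrite leqNgt proper_card //; apply/properP; split; last by exists x; rewrite !inE ?R_refl.
by apply/subsetP => z; rewrite !inE => zy; apply: R_trans zy yx.
Qed.

Lemma qval_subminimals_inj a b :
  [seq qval add zero (ideal_ge act G) a | G <- enum subs] =
  [seq qval add zero (ideal_ge act G) b | G <- enum subs] ->
  ~~ R a inf -> a = b.
Proof.
move=> /eq_in_map Eab ai; have [x xs xa] := exists_subminimal_below ai.
have := Eab (Cls x); rewrite mem_enum /qval !mem_ideal_ge xa => /(_ xs) /=.
by case: ifP => // _ ainf; move: ai; rewrite ainf R_refl.
Qed.

Lemma qval_Gmin_factor h h' :
  [seq qval add zero (ideal_ge act G) h | G <- enum subs] =
  [seq qval add zero (ideal_ge act G) h' | G <- enum subs] ->
  qval add zero (ideal_gt act Gm) h = qval add zero (ideal_gt act Gm) h'.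
Proof.
move=> E; rewrite /qval !mem_ideal_gt_Gmin.
case: (boolP (R h inf)) => hi; case: (boolP (R h' inf)) => h'i //.
- by have e := qval_subminimals_inj (esym E) h'i; rewrite e hi in h'i.
- by have e := qval_subminimals_inj E hi; rewrite e h'i in hi.
- exact: qval_subminimals_inj.
Qed.

Section QuotientAboveClass.
Variable g : H.
Hypothesis gi : ~~ R g inf.

Local Notation I := (ideal_ge act (Cls g)).
Local Notation qv := (qval add zero I).
Local Notation D' := (qcarrier add zero I).
Local Notation qa := (qact add zero act I).
Local Notation R' := (reachb qa).
Local Notation Cls' := (rclass D' qa).

Lemma qval_infty : qv inf = inf.
Proof. by rewrite /qval mem_ideal_ge gi. Qed.

Lemma mem_qcarrier x : (x \in D') = (x == inf) || R g x.
Proof.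
apply/imsetP/idP => [[h _ ->] | /orP[/eqP-> | gx]].
- by rewrite /qval mem_ideal_ge; case: ifP => [_ | /negbFE ->]; rewrite ?eqxx ?orbT.
- by exists inf; rewrite ?qval_infty.
- by exists x; rewrite // /qval mem_ideal_ge gx.
Qed.

Lemma qreachb_infty y : R' inf y.
Proof.
have [v Hv] := act_addr inf.
by apply/existsP; exists v; rewrite /qact Hv add_infty qval_infty.
Qed.

Lemma qreachb_above x y : R g x -> R' x y = R x y.
Proof.
move=> gx; apply/existsP/existsP => -[v /eqP xv]; exists v; apply/eqP.
  move: xv; rewrite /qact /qval mem_ideal_ge; case: ifP => // _ xinf.
  by move: gi; rewrite -xinf gx.
by rewrite /qact /qval mem_ideal_ge -xv gx.
Qed.

Lemma qreachb_to_infty y : R' y inf -> y = inf.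
Proof.
case/existsP => v /eqP ->; rewrite /qact /qval mem_ideal_ge.
by case: ifP => // /negbFE gv; move: gi; rewrite (R_trans gv (reachb_act act v inf)).
Qed.

Lemma qinfty : infty D' (qadd add zero I) (qv zero) = inf.
Proof.
apply: big_absorbing; rewrite ?mem_index_enum ?mem_qcarrier ?eqxx // => x.
  by rewrite /qadd infty_add qval_infty.
by rewrite /qadd add_infty qval_infty.
Qed.

Lemma qrclass_infty : Cls' inf = [set inf].
Proof.
apply/setP => y; rewrite !inE.
apply/andP/eqP => [[_ /andP[_ /qreachb_to_infty]] // | ->].
by rewrite mem_qcarrier eqxx qreachb_infty.
Qed.

Lemma qGmin : Gmin D' (qadd add zero I) (qv zero) qa = [set inf].
Proof. by rewrite /Gmin qinfty qrclass_infty. Qed.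

Lemma qrclass_above x : R g x -> Cls' x = Cls x.
Proof.
move=> gx; apply/setP => y; rewrite mem_rclass inE (qreachb_above _ gx).
apply/andP/andP => [[yD /andP[xy yx]] | [xy yx]].
  move: yD; rewrite mem_qcarrier => /orP[/eqP yinf | gy].
    by move: gi; rewrite -yinf (R_trans gx xy).
  by rewrite -(qreachb_above _ gy).
have gy : R g y by apply: R_trans xy.
by rewrite mem_qcarrier gy orbT xy /= (qreachb_above _ gy).
Qed.

Lemma qrclassesP G' : G' \in rclasses D' qa ->
  G' = [set inf] \/ exists2 x, R g x & G' = Cls x.
Proof.
case/imsetP => x; rewrite mem_qcarrier => /orP[/eqP-> | gx] ->.
  by left; apply: qrclass_infty.
by right; exists x => //; apply: qrclass_above.
Qed.

Lemma rclass_in_qrclasses x : R g x -> Cls x \in rclasses D' qa.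
Proof.
by move=> gx; apply/imsetP; exists x; rewrite ?mem_qcarrier ?gx ?orbT ?qrclass_above.
Qed.

Lemma qclt_infty x : R g x -> clt qa [set inf] (Cls x).
Proof.
move=> gx; apply/andP; split.
  apply/existsP; exists inf; rewrite inE eqxx /=.
  by apply/existsP; exists x; rewrite mem_rclass R_refl qreachb_infty.
apply/negP => /eqP e; have : x \in Cls x by rewrite mem_rclass R_refl.
by rewrite -e inE => /eqP xinf; move: gi; rewrite -xinf gx.
Qed.

Lemma qcle_rclass x y : R g x -> R g y -> cle qa (Cls x) (Cls y) = R x y.
Proof.
move=> gx gy; apply/existsP/idP => [[a /andP[]] | xy].
  rewrite mem_rclass => /andP[xa _] /existsP[b /andP[]].
  rewrite mem_rclass qreachb_above => [/andP[_ yb] ab|]; last exact: R_trans xa.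
  by apply: R_trans xa (R_trans ab yb).
exists x; rewrite mem_rclass R_refl /=.
by apply/existsP; exists y; rewrite mem_rclass R_refl /= qreachb_above.
Qed.

Lemma q_subminimals_above : q_subminimals add zero act I = [set Cls g].
Proof.
have gg := R_refl g.
apply/setP => G'; rewrite /q_subminimals inE in_set1 /subminimal qGmin.
apply/idP/eqP => [/andP[G'in /and3P[_ lt /forall_inP minG']] | ->].
  case: (qrclassesP G'in) => [G'inf | [x gx G'x]].
    by move: lt; rewrite G'inf /clt eqxx andbF.
  have := minG' _ (rclass_in_qrclasses gg).
  by rewrite qclt_infty //= /clt G'x qcle_rclass //= gx negbK => /eqP.
rewrite rclass_in_qrclasses //= qclt_infty //=.
apply/forall_inP => G'' /qrclassesP [-> | [y gy ->]]; first by rewrite /clt eqxx andbF.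
rewrite andbC /clt qcle_rclass //; apply/negP => /andP[/andP[yg ne] _].
by move: ne; rewrite eq_Cls yg gy.
Qed.

End QuotientAboveClass.

Lemma card_q_subminimals G :
  G \in subs -> #|q_subminimals add zero act (ideal_ge act G)| = 1.
Proof. by case/subminimals_rclass => g gi ->; rewrite q_subminimals_above ?cards1. Qed.

End IdempotentForestAlgebra.

Theorem lemma2 (A : Type) (H V : finType)
    (add : H -> H -> H) (zero : H) (mul : V -> V -> V) (one : V)
    (act : V -> H -> H) (aH : forest A -> H) (aV : context A -> V) :
  forest_algebra add zero mul one act ->
  (forall x, add x x = x) ->
  (forall x y, add x y = add y x) ->
  forest_hom add zero mul one act aH aV ->
  let subs := subminimals [set: H] add zero act in
  let Gmin0 := Gmin [set: H] add zero act in
  (forall s s' : forest A,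
     [seq qval add zero (ideal_ge act G) (aH s) | G <- enum subs] =
     [seq qval add zero (ideal_ge act G) (aH s') | G <- enum subs] ->
     qval add zero (ideal_gt act Gmin0) (aH s) =
     qval add zero (ideal_gt act Gmin0) (aH s'))
  /\
  (forall G, G \in subs ->
     #|q_subminimals add zero act (ideal_ge act G)| = 1).
Proof.
(* The factorisation holds already for elements of H, so the homomorphism is unused. *)
move=> [[addA _] [_ [[actM act1] [_ add_actions]]]] addxx addC _ subs Gmin0.
have act_addr h : exists v, forall g, act v g = add g h by case: (add_actions h).
split=> [s s' | G].
  exact: (qval_Gmin_factor addA addC addxx actM act1 act_addr).
exact: (card_q_subminimals addA addC addxx actM act1 act_addr).
Qed.
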